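(* (Cut elimination and subformula property.) Every sequent derivable in D.BL (resp. D.CBL) has a derivation in D.BL (resp. D.CBL) that does not use the Cut rule, and D.BL and D.CBL have the subformula property: every formula occurring in a cut-free derivation is a subformula of a formula occurring in its end-sequent.
   Context: Calculus D.BL. Two types $1,2$; type-$i$ atoms $p_i,q_i,\dots$. Type-1 formulas: $A_1::=p_1\mid 1_1\mid 0_1\mid \mathrm{p}A_2\mid A_1\sqcap_1A_1\mid A_1\sqcup_1A_1$; type-2 formulas: $A_2::=p_2\mid 1_2\mid 0_2\mid \mathrm{n}A_1\mid A_2\sqcap_2A_2\mid A_2\sqcup_2A_2$ (subformulas are taken across types, e.g. $A_2$ is a subformula of $\mathrm{p}A_2$). Type-1 structures: $X_1::=A_1\mid \hat1_1\mid\check0_1\mid \mathrm{P}X_2\mid X_1\hat\sqcap_1X_1\mid X_1\check\sqcup_1X_1\mid X_1\check\sqsupset_1X_1\mid X_1\hat\sqsubset_1X_1$; type-2 structures analogously with index 2 and $\mathrm{N}X_1$ instead of $\mathrm{P}X_2$. Sequents $X_i\vdash Y_i$ have both sides of the same type. Rules (for $i\in\{1,2\}$; ''$\Leftrightarrow$'' = both directions): Display: $X\hat\sqcap_iY\vdash Z\Leftrightarrow X\vdash Y\check\sqsupset_iZ$; $X\vdash Y\check\sqcup_iZ\Leftrightarrow X\hat\sqsubset_iY\vdash Z$; $\mathrm{P}X_2\vdash Y_1\Leftrightarrow X_2\vdash \mathrm{N}Y_1$; $\mathrm{N}X_1\vdash Y_2\Leftrightarrow X_1\vdash\mathrm{P}Y_2$.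 Identity $p_i\vdash p_i$; Cut: from $X\vdash A$ and $A\vdash Y$ infer $X\vdash Y$. Structural: from $X\hat\sqcap_i\hat1_i\vdash Y$ infer $X\vdash Y$; from $X\vdash Y\check\sqcup_i\check0_i$ infer $X\vdash Y$; exchange (from $X\hat\sqcap_iY\vdash Z$ infer $Y\hat\sqcap_iX\vdash Z$; from $X\vdash Y\check\sqcup_iZ$ infer $X\vdash Z\check\sqcup_iY$); associativity (from $(X\hat\sqcap_iY)\hat\sqcap_iZ\vdash W$ infer $X\hat\sqcap_i(Y\hat\sqcap_iZ)\vdash W$; from $X\vdash(Y\check\sqcup_iZ)\check\sqcup_iW$ infer $X\vdash Y\check\sqcup_i(Z\check\sqcup_iW)$); weakening (from $X\vdash Z$ infer $X\hat\sqcap_iY\vdash Z$; from $X\vdash Y$ infer $X\vdash Y\check\sqcup_iZ$); contraction (from $X\hat\sqcap_iX\vdash Z$ infer $X\vdash Z$; from $X\vdash Y\check\sqcup_iY$ infer $X\vdash Y$). Operational: from $\hat1_i\vdash X$ infer $1_i\vdash X$; axiom $\hat1_i\vdash1_i$; axiom $0_i\vdash\check0_i$; from $X\vdash\check0_i$ infer $X\vdash0_i$; from $A\hat\sqcap_iB\vdash X$ infer $A\sqcap_iB\vdash X$; from $X\vdash A$ and $Y\vdash B$ infer $X\hat\sqcap_iY\vdash A\sqcap_iB$; from $A\vdash X$ and $B\vdash Y$ infer $A\sqcup_iB\vdash X\check\sqcup_iY$; from $X\vdash A\check\sqcup_iB$ infer $X\vdash A\sqcup_iB$. Multi-type structural: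 $X_1\vdash Y_1\Leftrightarrow\mathrm{N}X_1\vdash\mathrm{N}Y_1$; $X_2\vdash Y_2\Leftrightarrow\mathrm{P}X_2\vdash\mathrm{P}Y_2$; from $\check0_1\vdash X_1$ infer $\mathrm{P}\check0_2\vdash X_1$; from $X_1\vdash\hat1_1$ infer $X_1\vdash\mathrm{P}\hat1_2$. Multi-type operational: from $\mathrm{N}A_1\vdash X_2$ infer $\mathrm{n}A_1\vdash X_2$; from $X_2\vdash\mathrm{N}A_1$ infer $X_2\vdash\mathrm{n}A_1$; from $\mathrm{P}A_2\vdash X_1$ infer $\mathrm{p}A_2\vdash X_1$; from $X_1\vdash\mathrm{P}A_2$ infer $X_1\vdash\mathrm{p}A_2$. D.CBL adds formulas ${\sim}_iA_i$, structures $\ast_iX_i$, and rules: $\ast_iX\vdash Y\Leftrightarrow\ast_iY\vdash X$; $X\vdash\ast_iY\Leftrightarrow Y\vdash\ast_iX$; $X\vdash Y\Leftrightarrow\ast_iY\vdash\ast_iX$; from $\mathrm{N}\ast_1X_1\vdash Y_2$ infer $\ast_2\mathrm{N}X_1\vdash Y_2$; from $X_2\vdash\mathrm{N}\ast_1Y_1$ infer $X_2\vdash\ast_2\mathrm{N}Y_1$; from $\ast_iA\vdash Y$ infer ${\sim}_iA\vdash Y$; from $X\vdash\ast_iA$ infer $X\vdash{\sim}_iA$. A formula is regarded as a structure; derivations are finite trees of rule applications with axioms at the leaves. *)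

From Stdlib Require Import List.
Import ListNotations.

Inductive typ : Type := T1 | T2.

(* Formulas of the language, parameterized by c : bool.
   c = false : language of D.BL;  c = true : language of D.CBL
   (the negation ~_i is only available when c = true). *)
Inductive fm (c : bool) : typ -> Type :=
| atom (t : typ) (n : nat) : fm c t
| one (t : typ) : fm c t
| zero (t : typ) : fm c t
| pf : fm c T2 -> fm c T1
| nf : fm c T1 -> fm c T2
| meet (t : typ) : fm c t -> fm c t -> fm c t
| join (t : typ) : fm c t -> fm c t -> fm c t
| neg (t : typ) : c = true -> fm c t -> fm c t.

Arguments atom {c} t n.
Arguments one {c} t.
Arguments zero {c} t.
Arguments pf {c} _.
Arguments nf {c} _.
Arguments meet {c t} _ _.
Arguments join {c t} _ _.
Arguments neg {c t} _ _.

Inductive st (c : bool) : typ -> Type :=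
| F (t : typ) : fm c t -> st c t
| hone (t : typ) : st c t
| czero (t : typ) : st c t
| SP : st c T2 -> st c T1
| SN : st c T1 -> st c T2
| hmeet (t : typ) : st c t -> st c t -> st c t
| cjoin (t : typ) : st c t -> st c t -> st c t
| cimp (t : typ) : st c t -> st c t -> st c t
| hsub (t : typ) : st c t -> st c t -> st c t
| star (t : typ) : c = true -> st c t -> st c t.

Arguments F {c t} _.
Arguments hone {c} t.
Arguments czero {c} t.
Arguments SP {c} _.
Arguments SN {c} _.
Arguments hmeet {c t} _ _.
Arguments cjoin {c t} _ _.
Arguments cimp {c t} _ _.
Arguments hsub {c t} _ _.
Arguments star {c t} _ _.

Record seqt (c : bool) : Type := Sq { sty : typ; lhs : st c sty; rhs : st c sty }.
Arguments Sq {c sty} _ _.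
Arguments sty {c} _.
Arguments lhs {c} _.
Arguments rhs {c} _.

Inductive rule (c : bool) : list (seqt c) -> seqt c -> Type :=
| r_disp1 t (X Y Z : st c t) : rule c [Sq (hmeet X Y) Z] (Sq X (cimp Y Z))
| r_disp1' t (X Y Z : st c t) : rule c [Sq X (cimp Y Z)] (Sq (hmeet X Y) Z)
| r_disp2 t (X Y Z : st c t) : rule c [Sq X (cjoin Y Z)] (Sq (hsub X Y) Z)
| r_disp2' t (X Y Z : st c t) : rule c [Sq (hsub X Y) Z] (Sq X (cjoin Y Z))
| r_dispPN (X : st c T2) (Y : st c T1) : rule c [Sq (SP X) Y] (Sq X (SN Y))
| r_dispPN' (X : st c T2) (Y : st c T1) : rule c [Sq X (SN Y)] (Sq (SP X) Y)
| r_dispNP (X : st c T1) (Y : st c T2) : rule c [Sq (SN X) Y] (Sq X (SP Y))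
| r_dispNP' (X : st c T1) (Y : st c T2) : rule c [Sq X (SP Y)] (Sq (SN X) Y)
| r_id t n : rule c [] (Sq (F (atom t n)) (F (atom t n)))
| r_cut t (X Y : st c t) (A : fm c t) : rule c [Sq X (F A); Sq (F A) Y] (Sq X Y)
| r_unitL t (X Y : st c t) : rule c [Sq (hmeet X (hone t)) Y] (Sq X Y)
| r_unitR t (X Y : st c t) : rule c [Sq X (cjoin Y (czero t))] (Sq X Y)
| r_exL t (X Y Z : st c t) : rule c [Sq (hmeet X Y) Z] (Sq (hmeet Y X) Z)
| r_exR t (X Y Z : st c t) : rule c [Sq X (cjoin Y Z)] (Sq X (cjoin Z Y))
| r_assocL t (X Y Z W : st c t) :
    rule c [Sq (hmeet (hmeet X Y) Z) W] (Sq (hmeet X (hmeet Y Z)) W)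
| r_assocR t (X Y Z W : st c t) :
    rule c [Sq X (cjoin (cjoin Y Z) W)] (Sq X (cjoin Y (cjoin Z W)))
| r_weakL t (X Y Z : st c t) : rule c [Sq X Z] (Sq (hmeet X Y) Z)
| r_weakR t (X Y Z : st c t) : rule c [Sq X Y] (Sq X (cjoin Y Z))
| r_contrL t (X Z : st c t) : rule c [Sq (hmeet X X) Z] (Sq X Z)
| r_contrR t (X Y : st c t) : rule c [Sq X (cjoin Y Y)] (Sq X Y)
| r_oneL t (X : st c t) : rule c [Sq (hone t) X] (Sq (F (one t)) X)
| r_oneR t : rule c [] (Sq (hone t) (F (one t)))
| r_zeroL t : rule c [] (Sq (F (zero t)) (czero t))
| r_zeroR t (X : st c t) : rule c [Sq X (czero t)] (Sq X (F (zero t)))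
| r_meetL t (A B : fm c t) (X : st c t) :
    rule c [Sq (hmeet (F A) (F B)) X] (Sq (F (meet A B)) X)
| r_meetR t (X Y : st c t) (A B : fm c t) :
    rule c [Sq X (F A); Sq Y (F B)] (Sq (hmeet X Y) (F (meet A B)))
| r_joinL t (A B : fm c t) (X Y : st c t) :
    rule c [Sq (F A) X; Sq (F B) Y] (Sq (F (join A B)) (cjoin X Y))
| r_joinR t (X : st c t) (A B : fm c t) :
    rule c [Sq X (cjoin (F A) (F B))] (Sq X (F (join A B)))
| r_NN (X Y : st c T1) : rule c [Sq X Y] (Sq (SN X) (SN Y))
| r_NN' (X Y : st c T1) : rule c [Sq (SN X) (SN Y)] (Sq X Y)
| r_PP (X Y : st c T2) : rule c [Sq X Y] (Sq (SP X) (SP Y))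
| r_PP' (X Y : st c T2) : rule c [Sq (SP X) (SP Y)] (Sq X Y)
| r_zeroP (X : st c T1) : rule c [Sq (czero T1) X] (Sq (SP (czero T2)) X)
| r_oneP (X : st c T1) : rule c [Sq X (hone T1)] (Sq X (SP (hone T2)))
| r_nL (A : fm c T1) (X : st c T2) : rule c [Sq (SN (F A)) X] (Sq (F (nf A)) X)
| r_nR (X : st c T2) (A : fm c T1) : rule c [Sq X (SN (F A))] (Sq X (F (nf A)))
| r_pL (A : fm c T2) (X : st c T1) : rule c [Sq (SP (F A)) X] (Sq (F (pf A)) X)
| r_pR (X : st c T1) (A : fm c T2) : rule c [Sq X (SP (F A))] (Sq X (F (pf A)))
| r_sw1 (h : c = true) t (X Y : st c t) : rule c [Sq (star h X) Y] (Sq (star h Y) X)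
| r_sw2 (h : c = true) t (X Y : st c t) : rule c [Sq X (star h Y)] (Sq Y (star h X))
| r_contra (h : c = true) t (X Y : st c t) : rule c [Sq X Y] (Sq (star h Y) (star h X))
| r_contra' (h : c = true) t (X Y : st c t) : rule c [Sq (star h Y) (star h X)] (Sq X Y)
| r_NstarL (h : c = true) (X : st c T1) (Y : st c T2) :
    rule c [Sq (SN (star h X)) Y] (Sq (star h (SN X)) Y)
| r_NstarR (h : c = true) (X : st c T2) (Y : st c T1) :
    rule c [Sq X (SN (star h Y))] (Sq X (star h (SN Y)))
| r_negL (h : c = true) t (A : fm c t) (Y : st c t) :
    rule c [Sq (star h (F A)) Y] (Sq (F (neg h A)) Y)
| r_negR (h : c = true) t (X : st c t) (A : fm c t) :
    rule c [Sq X (star h (F A))] (Sq X (F (neg h A))).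

Inductive der (c : bool) : seqt c -> Type :=
| dnode (ps : list (seqt c)) (s : seqt c) : rule c ps s -> ders c ps -> der c s
with ders (c : bool) : list (seqt c) -> Type :=
| dnil : ders c []
| dcons (s : seqt c) (ps : list (seqt c)) : der c s -> ders c ps -> ders c (s :: ps).

Arguments dnode {c ps s} _ _.
Arguments dnil {c}.
Arguments dcons {c s ps} _ _.

Definition is_cut {c ps s} (r : rule c ps s) : Prop :=
  match r return Prop with r_cut _ _ _ _ _ => True | _ => False end.

Fixpoint cut_free {c s} (d : der c s) : Prop :=
  match d with dnode r ds => ~ is_cut r /\ cut_free_l ds end
with cut_free_l {c ps} (ds : ders c ps) : Prop :=
  match ds with dnil => True | dcons d ds' => cut_free d /\ cut_free_l ds' end.

Definition afm (c : bool) : Type := { t : typ & fm c t }.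

Fixpoint fms_st {c t} (X : st c t) : list (afm c) :=
  match X with
  | F A => [existT _ _ A]
  | hone _ => []
  | czero _ => []
  | SP Y => fms_st Y
  | SN Y => fms_st Y
  | hmeet Y Z => fms_st Y ++ fms_st Z
  | cjoin Y Z => fms_st Y ++ fms_st Z
  | cimp Y Z => fms_st Y ++ fms_st Z
  | hsub Y Z => fms_st Y ++ fms_st Z
  | star _ Y => fms_st Y
  end.

Definition seq_fms {c} (s : seqt c) : list (afm c) := fms_st (lhs s) ++ fms_st (rhs s).

Fixpoint occurs {c s} (A : afm c) (d : der c s) : Prop :=
  In A (seq_fms s) \/ match d with dnode _ ds => occurs_l A ds end
with occurs_l {c ps} (A : afm c) (ds : ders c ps) : Prop :=
  match ds with dnil => False | dcons d ds' => occurs A d \/ occurs_l A ds' end.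

Inductive subfm (c : bool) : afm c -> afm c -> Prop :=
| sf_refl A : subfm c A A
| sf_pf A (B : fm c T2) : subfm c A (existT _ T2 B) -> subfm c A (existT _ T1 (pf B))
| sf_nf A (B : fm c T1) : subfm c A (existT _ T1 B) -> subfm c A (existT _ T2 (nf B))
| sf_meetl A t (B C : fm c t) : subfm c A (existT _ t B) -> subfm c A (existT _ t (meet B C))
| sf_meetr A t (B C : fm c t) : subfm c A (existT _ t C) -> subfm c A (existT _ t (meet B C))
| sf_joinl A t (B C : fm c t) : subfm c A (existT _ t B) -> subfm c A (existT _ t (join B C))
| sf_joinr A t (B C : fm c t) : subfm c A (existT _ t C) -> subfm c A (existT _ t (join B C))
| sf_neg A t (h : c = true) (B : fm c t) :
    subfm c A (existT _ t B) -> subfm c A (existT _ t (neg h B)).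

From Stdlib Require Import List Program.Equality Eqdep_dec.

(* Cut elimination follows Belnap's method for display calculi. Cut-free
   derivable sequents are closed under cut: in a cut-free derivation of
   [X |- A], resp. [A |- Y], the occurrences of [A] on the succedent, resp.
   antecedent, side can be replaced throughout by [Y], resp. [X], because every
   rule stays an instance of itself under uniform substitution of its
   parameters, and where an occurrence is principal it is displayed alone, so
   the cut becomes a principal cut, reduced to cuts on immediate subformulas
   of [A] (induction on [A]). Every rule but Cut only has premises built from
   subformulas of formulas of its conclusion, which gives the subformula
   property. *)

Section CutElimination.

Variable c : bool.

Inductive cf_derivable : seqt c -> Prop :=
| cf_rule ps s (r : rule c ps s) : ~ is_cut r -> Forall cf_derivable ps -> cf_derivable s.

Lemma cf_derivable_ind_nested (P : seqt c -> Prop) :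
  (forall ps s (r : rule c ps s), ~ is_cut r -> Forall P ps -> P s) ->
  forall s, cf_derivable s -> P s.
Proof.
  intros Hrule; fix IH 2; intros s [ps s' r Hr Hps].
  apply (Hrule ps s' r Hr); clear r Hr.
  induction Hps as [|p ps Hp _ IHps]; constructor; [exact (IH p Hp) | exact IHps].
Qed.

Lemma cut_free_ders ps :
  Forall (fun p => exists d : der c p, cut_free d) ps -> exists ds : ders c ps, cut_free_l ds.
Proof.
  induction 1 as [|p ps [d Hd] _ [ds Hds]].
  - exists dnil; exact I.
  - exists (dcons d ds); split; assumption.
Qed.

Lemma cf_derivable_cut_free s : cf_derivable s -> exists d : der c s, cut_free d.
Proof.
  revert s; apply cf_derivable_ind_nested; intros ps s r Hr Hps.
  destruct (cut_free_ders ps Hps) as [ds Hds].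
  exists (dnode r ds); split; assumption.
Qed.

Inductive sctx (h : typ) : typ -> Type :=
| Hole : sctx h h
| CF t : fm c t -> sctx h t
| Chone t : sctx h t
| Cczero t : sctx h t
| CSP : sctx h T2 -> sctx h T1
| CSN : sctx h T1 -> sctx h T2
| Chmeet t : sctx h t -> sctx h t -> sctx h t
| Ccjoin t : sctx h t -> sctx h t -> sctx h t
| Ccimp t : sctx h t -> sctx h t -> sctx h t
| Chsub t : sctx h t -> sctx h t -> sctx h t
| Cstar t : c = true -> sctx h t -> sctx h t.
Arguments Hole {h}.
Arguments CF {h t} _.
Arguments Chone {h} t.
Arguments Cczero {h} t.
Arguments CSP {h} _.
Arguments CSN {h} _.
Arguments Chmeet {h t} _ _.
Arguments Ccjoin {h t} _ _.
Arguments Ccimp {h t} _ _.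
Arguments Chsub {h t} _ _.
Arguments Cstar {h t} _ _.

Fixpoint plug {h t} (K : sctx h t) (Z : st c h) : st c t :=
  match K in sctx _ t return st c t with
  | Hole => Z
  | CF A => F A
  | Chone t => hone t
  | Cczero t => czero t
  | CSP K => SP (plug K Z)
  | CSN K => SN (plug K Z)
  | Chmeet K1 K2 => hmeet (plug K1 Z) (plug K2 Z)
  | Ccjoin K1 K2 => cjoin (plug K1 Z) (plug K2 Z)
  | Ccimp K1 K2 => cimp (plug K1 Z) (plug K2 Z)
  | Chsub K1 K2 => hsub (plug K1 Z) (plug K2 Z)
  | Cstar e K => star e (plug K Z)
  end.

(* Polarity [false] is the antecedent, [true] the succedent; [holes_at b pol K]
   says that all holes of [K], placed at polarity [pol], have polarity [b]. *)
Fixpoint holes_at {h t} (b pol : bool) (K : sctx h t) : Prop :=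
  match K with
  | Hole => pol = b
  | CF _ | Chone _ | Cczero _ => True
  | CSP K | CSN K => holes_at b pol K
  | Chmeet K1 K2 | Ccjoin K1 K2 => holes_at b pol K1 /\ holes_at b pol K2
  | Ccimp K1 K2 => holes_at b (negb pol) K1 /\ holes_at b pol K2
  | Chsub K1 K2 => holes_at b pol K1 /\ holes_at b (negb pol) K2
  | Cstar _ K => holes_at b (negb pol) K
  end.

Fixpoint const_ctx {h t} (X : st c t) : sctx h t :=
  match X with
  | F A => CF A
  | hone t => Chone t
  | czero t => Cczero t
  | SP X => CSP (const_ctx X)
  | SN X => CSN (const_ctx X)
  | hmeet X Y => Chmeet (const_ctx X) (const_ctx Y)
  | cjoin X Y => Ccjoin (const_ctx X) (const_ctx Y)
  | cimp X Y => Ccimp (const_ctx X) (const_ctx Y)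
  | hsub X Y => Chsub (const_ctx X) (const_ctx Y)
  | star e X => Cstar e (const_ctx X)
  end.

Lemma plug_const_ctx h t (X : st c t) (Z : st c h) : plug (const_ctx X) Z = X.
Proof. induction X; simpl; congruence. Qed.

Lemma holes_at_const_ctx h t (X : st c t) b pol : holes_at b pol (@const_ctx h t X).
Proof. revert pol; induction X; simpl; auto. Qed.

(* [left_intro A W] ([right_intro A U]) says that [A |- W] ([U |- A]) is the
   conclusion of a left (right) introduction of [A] from cut-free derivable premises. *)
Definition left_intro {t} (A : fm c t) : st c t -> Prop :=
  match A in fm _ t return st c t -> Prop with
  | atom t n => fun W => W = F (atom t n)
  | one t => fun W => cf_derivable (Sq (hone t) W)
  | zero t => fun W => W = czero t
  | pf B => fun W => cf_derivable (Sq (SP (F B)) W)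
  | nf B => fun W => cf_derivable (Sq (SN (F B)) W)
  | meet B C => fun W => cf_derivable (Sq (hmeet (F B) (F C)) W)
  | join B C => fun W => exists W1 W2, W = cjoin W1 W2 /\
                  cf_derivable (Sq (F B) W1) /\ cf_derivable (Sq (F C) W2)
  | neg e B => fun W => cf_derivable (Sq (star e (F B)) W)
  end.

Definition right_intro {t} (A : fm c t) : st c t -> Prop :=
  match A in fm _ t return st c t -> Prop with
  | atom t n => fun U => U = F (atom t n)
  | one t => fun U => U = hone t
  | zero t => fun U => cf_derivable (Sq U (czero t))
  | pf B => fun U => cf_derivable (Sq U (SP (F B)))
  | nf B => fun U => cf_derivable (Sq U (SN (F B)))
  | meet B C => fun U => exists U1 U2, U = hmeet U1 U2 /\
                  cf_derivable (Sq U1 (F B)) /\ cf_derivable (Sq U2 (F C))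
  | join B C => fun U => cf_derivable (Sq U (cjoin (F B) (F C)))
  | neg e B => fun U => cf_derivable (Sq U (star e (F B)))
  end.

Definition replaceable {h} (A : fm c h) (Z : st c h) (b : bool) (s : seqt c) : Prop :=
  forall KL KR : sctx h (sty s), lhs s = plug KL (F A) -> rhs s = plug KR (F A) ->
    holes_at b false KL -> holes_at b true KR -> cf_derivable (Sq (plug KL Z) (plug KR Z)).

Ltac inj_existT H := injection H; clear H; intros;
  repeat match goal with E : existT _ _ _ = existT _ _ _ |- _ =>
    apply inj_pair2_eq_dec in E; [|decide equality] end.

Ltac unplug A := repeat match goal with
 | H : ?P = plug ?K (F A) |- _ => is_var P; subst P
 | H : _ = plug ?K (F A) |- _ =>
     is_var K; dependent destruction K; simpl in H; try discriminate; try inj_existT H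
 | H : ?P = ?v |- _ => is_var v; subst v
 | H : ?v = ?P |- _ => is_var v; subst v
 end.

Ltac unify_star_proofs := repeat match goal with e1 : c = true, e2 : c = true |- _ =>
    assert (e2 = e1) by apply UIP_dec, Bool.bool_dec; subst e2 end.

(* [reify h Z S] is a context [K] with [plug K Z = S]; it turns [Z] and the
   [plug K' Z] left by [unplug] into holes. *)
Ltac reify h Z S := lazymatch S with
 | plug ?K Z => K
 | Z => constr:(@Hole h)
 | F ?B => constr:(@CF h _ B)
 | hone ?t => constr:(@Chone h t)
 | czero ?t => constr:(@Cczero h t)
 | SP ?X => let k := reify h Z X in constr:(@CSP h k)
 | SN ?X => let k := reify h Z X in constr:(@CSN h k)
 | hmeet ?X ?Y => let k1 := reify h Z X in let k2 := reify h Z Y in constr:(Chmeet k1 k2)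
 | cjoin ?X ?Y => let k1 := reify h Z X in let k2 := reify h Z Y in constr:(Ccjoin k1 k2)
 | cimp ?X ?Y => let k1 := reify h Z X in let k2 := reify h Z Y in constr:(Ccimp k1 k2)
 | hsub ?X ?Y => let k1 := reify h Z X in let k2 := reify h Z Y in constr:(Chsub k1 k2)
 | star ?e ?X => let k := reify h Z X in constr:(Cstar e k)
 end.

Ltac solve_holes_at := simpl in *; repeat match goal with H : _ /\ _ |- _ => destruct H end;
  repeat split; auto.

Ltac solve_premise Z := let h := match type of Z with st _ ?h => h end in
  lazymatch goal with
  | |- cf_derivable (Sq ?L ?R) =>
      let KL := reify h Z L in let KR := reify h Z R in
      match goal with IH : replaceable _ Z _ _ |- _ =>
        apply (IH KL KR); [reflexivity | reflexivity | solve_holes_at | solve_holes_at] end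
  end.

Ltac solve_premises Z :=
  repeat first [apply Forall_nil | apply Forall_cons; [solve_premise Z |]].

Ltac reapply_rule Z := unshelve eapply cf_rule;
  [shelve | econstructor | simpl; tauto | solve [solve_premises Z]].

Ltac split_Forall := repeat match goal with H : Forall _ (_ :: _) |- _ =>
  inversion_clear H end.

Lemma cf_derivable_replace h (A : fm c h) (Z : st c h) (b : bool)
  (Hprincipal : if b then forall U, right_intro A U -> cf_derivable (Sq U Z)
                else forall W, left_intro A W -> cf_derivable (Sq Z W)) :
  forall s, cf_derivable s -> replaceable A Z b s.
Proof.
  apply cf_derivable_ind_nested; intros ps s r Hr IH.
  (* Either all marked occurrences are parameters and the same rule applies to
     the substituted premises, or one of them is principal, hence the whole
     side of the conclusion, and [Hprincipal] applies. *)
  destruct r; try (exfalso; exact (Hr I)); split_Forall;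
    unfold replaceable; simpl; intros KL KR HL HR PL PR; unplug A; unify_star_proofs; simpl;
    first [ reapply_rule Z
          | destruct b; simpl in PL, PR; try discriminate; apply Hprincipal; simpl;
            first [ reflexivity | solve_premise Z
                  | eexists _, _; split; [reflexivity | split; solve_premise Z] ] ].
Qed.

Lemma cf_derivable_replace_left t (A : fm c t) (Z Y : st c t) :
  (forall W, left_intro A W -> cf_derivable (Sq Z W)) ->
  cf_derivable (Sq (F A) Y) -> cf_derivable (Sq Z Y).
Proof.
  intros Hprincipal HY.
  pose proof (cf_derivable_replace t A Z false Hprincipal _ HY Hole (const_ctx Y)) as H.
  simpl in H; rewrite !plug_const_ctx in H.
  apply H; simpl; auto using holes_at_const_ctx.
Qed.

Lemma cf_derivable_replace_right t (A : fm c t) (X Z : st c t) :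
  (forall U, right_intro A U -> cf_derivable (Sq U Z)) ->
  cf_derivable (Sq X (F A)) -> cf_derivable (Sq X Z).
Proof.
  intros Hprincipal HX.
  pose proof (cf_derivable_replace t A Z true Hprincipal _ HX (const_ctx X) Hole) as H.
  simpl in H; rewrite !plug_const_ctx in H.
  apply H; simpl; auto using holes_at_const_ctx.
Qed.

Lemma cut_admissible_of_principal t (A : fm c t) :
  (forall U W, right_intro A U -> left_intro A W -> cf_derivable (Sq U W)) ->
  forall X Y, cf_derivable (Sq X (F A)) -> cf_derivable (Sq (F A) Y) ->
  cf_derivable (Sq X Y).
Proof.
  intros Hprincipal X Y HX HY.
  apply (cf_derivable_replace_right t A X Y); [|exact HX].
  intros U HU; apply (cf_derivable_replace_left t A U Y); [|exact HY].
  intros W HW; exact (Hprincipal U W HU HW).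
Qed.

Ltac by_rule r := unshelve eapply cf_rule;
  [shelve | eapply r | simpl; tauto | repeat apply Forall_cons; try apply Forall_nil].

Lemma cut_admissible t (A : fm c t) X Y :
  cf_derivable (Sq X (F A)) -> cf_derivable (Sq (F A) Y) -> cf_derivable (Sq X Y).
Proof.
  revert X Y; induction A; apply cut_admissible_of_principal; simpl; intros U W HU HW.
  - subst; by_rule r_id.
  - subst; exact HW.
  - subst; exact HU.
  - by_rule r_NN'; apply IHA; [by_rule r_dispNP'; exact HU | by_rule r_dispPN; exact HW].
  - by_rule r_PP'; apply IHA; [by_rule r_dispPN'; exact HU | by_rule r_dispNP; exact HW].
  - destruct HU as (U1 & U2 & -> & H1 & H2).
    by_rule r_exL; by_rule r_disp1'; apply IHA2; [exact H2|].
    by_rule r_disp1; by_rule r_exL; by_rule r_disp1'; apply IHA1; [exact H1|].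
    by_rule r_disp1; exact HW.
  - destruct HW as (W1 & W2 & -> & H1 & H2).
    by_rule r_exR; by_rule r_disp2'; apply IHA1; [|exact H1].
    by_rule r_disp2; by_rule r_exR; by_rule r_disp2'; apply IHA2; [|exact H2].
    by_rule r_disp2; exact HU.
  - by_rule r_contra'; apply IHA; [by_rule r_sw1; exact HW | by_rule r_sw2; exact HU].
Qed.

Lemma rule_cf_derivable ps s (r : rule c ps s) :
  Forall cf_derivable ps -> cf_derivable s.
Proof.
  generalize (cf_rule ps s r); destruct r; intros Hcut_free Hps;
    try exact (Hcut_free (fun f => f) Hps).
  split_Forall; eapply cut_admissible; eassumption.
Qed.

Scheme der_ind_mut := Induction for der Sort Prop
  with ders_ind_mut := Induction for ders Sort Prop.

Lemma der_cf_derivable s : der c s -> cf_derivable s.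
Proof.
  intros d; induction d as [ps s r ds IH| |p ps d IHd ds IHds] using der_ind_mut
    with (P0 := fun ps _ => Forall cf_derivable ps).
  - exact (rule_cf_derivable ps s r IH).
  - constructor.
  - constructor; assumption.
Qed.

Definition subfm_of_seqt (s : seqt c) (A : afm c) : Prop :=
  exists B, In B (seq_fms s) /\ subfm c A B.

Lemma subfm_trans (A B C : afm c) : subfm c A B -> subfm c B C -> subfm c A C.
Proof. intros HAB HBC; induction HBC; [exact HAB | solve [econstructor; auto] ..]. Qed.

Ltac pick_subfm L := match L with
  | ?a :: ?L' => first [ exists a; split; [rewrite ?in_app_iff; simpl; tauto
                                         | solve [repeat econstructor]]
                       | pick_subfm L' ]
  | ?L1 ++ ?L2 => first [ pick_subfm L1 | pick_subfm L2 ]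
  end.

Ltac destruct_or := repeat match goal with
  | H : _ \/ _ |- _ => destruct H
  | H : False |- _ => destruct H
  end.

Lemma rule_premise_subfm ps s (r : rule c ps s) p B :
  ~ is_cut r -> In p ps -> In B (seq_fms p) -> subfm_of_seqt s B.
Proof.
  destruct r; intros Hr Hp HB; try (exfalso; exact (Hr I));
    simpl in Hp; destruct_or; subst;
    unfold subfm_of_seqt, seq_fms in *; cbn [fms_st lhs rhs] in *;
    rewrite ?in_app_iff in HB; simpl in HB; destruct_or; subst;
    first [ exists B; split; [rewrite ?in_app_iff; simpl; tauto | apply sf_refl]
          | match goal with |- exists B, In B ?L /\ _ => pick_subfm L end ].
Qed.

Lemma cut_free_subfm s (d : der c s) :
  cut_free d -> forall A, occurs A d -> subfm_of_seqt s A.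
Proof.
  induction d as [ps s r ds IH| |p ps d IHd ds IHds] using der_ind_mut
    with (P0 := fun ps ds => cut_free_l ds -> forall A, occurs_l A ds ->
                  exists p, In p ps /\ subfm_of_seqt p A);
    simpl; intros Hcf A HA.
  - destruct Hcf as [Hr Hds], HA as [HA | HA].
    + exists A; split; [exact HA | apply sf_refl].
    + destruct (IH Hds A HA) as (p & Hp & B & HB & HAB).
      destruct (rule_premise_subfm ps s r p B Hr Hp HB) as (C & HC & HBC).
      exists C; split; [exact HC | exact (subfm_trans A B C HAB HBC)].
  - contradiction.
  - destruct Hcf as [Hd Hds], HA as [HA | HA].
    + exists p; split; [left; reflexivity | exact (IHd Hd A HA)].
    + destruct (IHds Hds A HA) as (q & Hq & HA').
      exists q; split; [right; exact Hq | exact HA'].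
Qed.

End CutElimination.

Theorem mainTheorem4 (c : bool) :
  (forall s : seqt c, der c s -> exists d : der c s, cut_free d) /\
  (forall (s : seqt c) (d : der c s), cut_free d ->
     forall A : afm c, occurs A d ->
       exists B : afm c, In B (seq_fms s) /\ subfm c A B).
Proof.
  split.
  - intros s d; exact (cf_derivable_cut_free c s (der_cf_derivable c s d)).
  - exact (cut_free_subfm c).
Qed.
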